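(* Let $n,m,m'\in\mathbb{N}$ with $\gcd(m,m')=1$, and let $\{R_j\}_{j\in J}$ be a system of representatives of the right cosets in $\Gamma_0(mm'n)\backslash\Gamma_0(mn)$. Then $\{B_mR_jB_m^{-1}\}_{j\in J}$ is a system of representatives of the right cosets in $\Gamma_0(m'n)\backslash\Gamma_0(n)$.
   Context: $B_m=\begin{pmatrix}m&0\\0&1\end{pmatrix}$; $\Gamma_0(N)=\{\begin{pmatrix}a&b\\c&d\end{pmatrix}\in SL(2,\mathbb{Z}):N\mid c\}$. A system of representatives $\{R_j\}$ of the right cosets in $H\backslash G$ means $G=\bigsqcup_jHR_j$ (disjoint union). *)

From HB Require Import structures.
From mathcomp Require Import all_boot all_order all_algebra.
Set Implicit Arguments. Unset Strict Implicit. Unset Printing Implicit Defensive.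
Import Order.TTheory GRing.Theory Num.Theory.
Local Open Scope ring_scope.

(* 2x2 matrices over Q; SL(2,Z) and its congruence subgroups are viewed as
   subsets of 'M[rat]_2, so that B_m^{-1} makes sense. *)
Definition mx2 := 'M[rat]_2.

Definition integral_mx (A : mx2) : Prop :=
  forall i j : 'I_2, exists z : int, A i j = z%:~R.

Definition SL2Z (A : mx2) : Prop := integral_mx A /\ \det A = 1.

Definition Gamma0 (N : nat) (A : mx2) : Prop :=
  SL2Z A /\ exists z : int, A ord_max ord0 = (N%:Z * z)%:~R.

Definition Bm (m : nat) : mx2 :=
  \matrix_(i < 2, j < 2) (if i == j then (if i == ord0 then m%:R else 1) else 0).

Definition right_coset_reps (H G : mx2 -> Prop) (J : Type) (R : J -> mx2) : Prop :=
  (forall g, G g <-> exists j, exists h, H h /\ g = h *m R j) /\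
  (forall j k, j <> k -> forall g,
      (exists h, H h /\ g = h *m R j) -> (exists h, H h /\ g = h *m R k) -> False).

From HB Require Import structures.
From mathcomp Require Import all_boot all_order all_algebra.
From mathcomp Require Import ring.
Import Order.TTheory GRing.Theory Num.Theory.
Local Open Scope ring_scope.

(* Conjugation by B_m sends (a b; c d) to (a, mb; c/m, d).  Hence it maps
   Gamma_0(mN) onto the elements of Gamma_0(N) whose upper right entry is
   divisible by m, and an element z of SL(2,Z) lies in Gamma_0(mN) as soon as
   its conjugate lies in Gamma_0(N).  So conjugation carries the cosets
   Gamma_0(mm'n) R_j to pairwise distinct cosets Gamma_0(m'n) B_m R_j B_m^-1.
   These cover Gamma_0(n) because multiplying any g = (a b; nc d) in
   Gamma_0(n) on the left by a suitable element of Gamma_0(m'n) makes its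
   upper right entry divisible by m.  This works because K in m'nZ can be
   chosen with d + Kb prime to m: gcd(d, nb) = 1 and gcd(m, m') = 1. *)

Lemma coprime_by_primes (x m : nat) : (0 < m)%N ->
  (forall p, prime p -> (p %| x)%N -> (p %| m)%N -> False) -> coprime x m.
Proof.
move=> m_gt0 no_common; rewrite /coprime; case: ltngtP => //.
- by rewrite ltnS leqn0 => /eqP gcd0; have := gcdn_gt0 x m; rewrite gcd0 m_gt0 orbT.
- case/pdivP=> p p_pr p_dvd; case: (no_common p p_pr).
  + exact: dvdn_trans p_dvd (dvdn_gcdl _ _).
  + exact: dvdn_trans p_dvd (dvdn_gcdr _ _).
Qed.

Lemma coprimez_shift {d M : int} {m : nat} : (0 < m)%N ->
  coprimez (gcdz d M) m -> exists k : int, coprimez (d + M * k) m.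
Proof.
move=> m_gt0 cop_dM.
(* Every prime factor of m divides exactly one of d and k. *)
pose k := (\prod_(p <- primes m | ~~ (p %| `|d|)) p)%N.
exists k%:Z; rewrite coprimezE absz_nat; apply: coprime_by_primes => // p p_pr p_dvd p_m.
have p_k : (p %| k)%N = ~~ (p %| `|d|)%N.
  rewrite (Euclid_dvd_prod _ _ _ p_pr) big_has_cond; apply/hasP/idP.
  - case=> q; rewrite mem_primes => /andP[q_pr _] /andP[/= q_d].
    by rewrite dvdn_prime2 // => /eqP->.
  - by move=> p_d; exists p; rewrite ?mem_primes ?p_pr ?m_gt0 //= p_d dvdnn.
have {}p_dvd : (p%:Z %| d + M * k%:Z)%Z by [].
have [p_d | p_d] := boolP (p %| `|d|)%N.
- have p_Mk : (p%:Z %| M * k%:Z)%Z by rewrite -(rpredDl _ (_ : (p%:Z %| d)%Z)).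
  have p_M : (p %| `|M|)%N.
    by move: p_Mk; rewrite dvdzE abszM absz_nat Euclid_dvdM // p_k p_d orbF.
  have p_gcd : (p %| gcdn `|d| `|M|)%N by rewrite dvdn_gcd p_d.
  by move: (coprime_dvdl p_gcd cop_dM); rewrite prime_coprime // p_m.
- have p_Mk : (p%:Z %| M * k%:Z)%Z.
    by apply: dvdz_mull; rewrite dvdzE absz_nat p_k.
  by move: p_dvd; rewrite rpredDr // dvdzE (negbTE p_d).
Qed.

Definition mat2 (a b c d : rat) : mx2 :=
  \matrix_(i, j) if i == 0 then (if j == 0 then a else b) else (if j == 0 then c else d).

Definition mat2z (a b c d : int) : mx2 := mat2 a%:~R b%:~R c%:~R d%:~R.

Lemma mat2_entries (A : mx2) : A = mat2 (A 0 0) (A 0 1) (A 1 0) (A 1 1).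
Proof.
apply/matrixP => i j; rewrite mxE.
by case: i j => [[|[|//]] ?] [[|[|//]] ?]; congr (A _ _); apply: val_inj.
Qed.

Lemma mat2_10 a b c d : mat2 a b c d ord_max 0 = c.
Proof. by rewrite mxE. Qed.

Lemma mat2_01 a b c d : mat2 a b c d 0 1 = b.
Proof. by rewrite mxE. Qed.

Lemma mul_mat2 a b c d a' b' c' d' : mat2 a b c d *m mat2 a' b' c' d' =
  mat2 (a * a' + b * c') (a * b' + b * d') (c * a' + d * c') (c * b' + d * d').
Proof.
apply/matrixP => i j; rewrite !mxE !big_ord_recl big_ord0 !mxE addr0.
by case: i j => [[|[|//]] ?] [[|[|//]] ?].
Qed.

Lemma mul_mat2z a b c d a' b' c' d' : mat2z a b c d *m mat2z a' b' c' d' =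
  mat2z (a * a' + b * c') (a * b' + b * d') (c * a' + d * c') (c * b' + d * d').
Proof. by rewrite mul_mat2 /mat2z !(intrD, intrM). Qed.

Lemma det_mat2 a b c d : \det (mat2 a b c d) = a * d - b * c.
Proof.
rewrite (expand_det_row _ 0) !big_ord_recl big_ord0 /cofactor !det_mx11 !mxE /=.
by rewrite expr0 expr1 mul1r mulN1r addr0 mulrN.
Qed.

Lemma mat2z1 : 1%:M = mat2z 1 0 0 1.
Proof. by apply/matrixP => i j; rewrite !mxE; case: i j => [[|[|//]] ?] [[|[|//]] ?]. Qed.

Lemma invmx_mat2z {a b c d : int} : a * d - b * c = 1 ->
  mat2z a b c d \in unitmx /\ invmx (mat2z a b c d) = mat2z d (- b) (- c) a.
Proof.
move=> det1; have inv : mat2z d (- b) (- c) a *m mat2z a b c d = 1%:M.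
  by rewrite mul_mat2z mat2z1 -det1; congr mat2z; ring.
have [_ unitA] := mulmx1_unit inv.
by split=> //; rewrite -[RHS](mulmxK unitA) inv mul1mx.
Qed.

Lemma SL2ZP A : SL2Z A <-> exists a b c d : int, A = mat2z a b c d /\ a * d - b * c = 1.
Proof.
split=> [[intA detA] | [a [b [c [d [-> det1]]]]]].
- have [[a Ea] [b Eb]] := (intA 0 0, intA 0 1).
  have [[c Ec] [d Ed]] := (intA 1 0, intA 1 1).
  have EA : A = mat2z a b c d by rewrite [LHS]mat2_entries Ea Eb Ec Ed.
  exists a, b, c, d; split=> //; apply: (@intr_inj rat).
  by rewrite intrB !intrM -[RHS]detA EA det_mat2.
- split; last by rewrite det_mat2 -!intrM -intrB det1.
  by move=> i j; rewrite mxE; do 2 case: ifP => _; eexists.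
Qed.

Lemma Gamma0P N A : Gamma0 N A <->
  exists a b c d : int, A = mat2z a b (N%:Z * c) d /\ a * d - b * (N%:Z * c) = 1.
Proof.
split=> [[/SL2ZP[a [b [c' [d [EA det1]]]]] [c Ec]] | [a [b [c [d [EA det1]]]]]].
- have Ec' : c' = N%:Z * c by apply: (@intr_inj rat); rewrite -Ec EA mat2_10.
  by exists a, b, c, d; rewrite -Ec'.
- by split; [apply/SL2ZP; exists a, b, (N%:Z * c), d | exists c; rewrite EA mat2_10].
Qed.

Definition mx2_group (S : mx2 -> Prop) : Prop :=
  [/\ S 1%:M, forall x y, S x -> S y -> S (x *m y)
    & forall x, S x -> x \in unitmx /\ S (invmx x)].

Lemma Gamma0_1 N : Gamma0 N 1%:M.
Proof. by apply/Gamma0P; exists 1, 0, 0, 1; rewrite mat2z1 !mulr0. Qed.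

Lemma Gamma0_mul {N x y} : Gamma0 N x -> Gamma0 N y -> Gamma0 N (x *m y).
Proof.
move=> /Gamma0P[a [b [c [d [-> det1]]]]] /Gamma0P[a' [b' [c' [d' [-> det1']]]]].
apply/Gamma0P; rewrite mul_mat2z.
exists (a * a' + b * (N%:Z * c')), (a * b' + b * d'), (c * a' + d * c').
exists (N%:Z * c * b' + d * d'); split; first by congr mat2z; ring.
by rewrite -[RHS]mulr1 -{1}det1 -det1'; ring.
Qed.

Lemma Gamma0_inv {N x} : Gamma0 N x -> x \in unitmx /\ Gamma0 N (invmx x).
Proof.
move=> /Gamma0P[a [b [c [d [-> det1]]]]]; have [unit_x ->] := invmx_mat2z det1.
split=> //; apply/Gamma0P; exists d, (- b), (- c), a.
by split; [rewrite mulrN | rewrite -det1; ring].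
Qed.

Lemma Gamma0_group N : mx2_group (Gamma0 N).
Proof. by split; [exact: Gamma0_1 | exact: @Gamma0_mul | exact: @Gamma0_inv]. Qed.

Lemma Gamma0_dvd {N N' x} : (N %| N')%N -> Gamma0 N' x -> Gamma0 N x.
Proof.
move=> /dvdnP[k ->] /Gamma0P[a [b [c [d [-> det1]]]]].
apply/Gamma0P; exists a, b, (k%:Z * c), d.
by rewrite mulrCA mulrA -PoszM.
Qed.

Lemma Bm_mat2 m : Bm m = mat2 m%:R 0 0 1.
Proof. by apply/matrixP => i j; rewrite !mxE; case: i j => [[|[|//]] ?] [[|[|//]] ?]. Qed.

Section ConjugationByBm.
Context {m : nat} (m_gt0 : (0 < m)%N).

Let m_neq0 : (m%:R : rat) != 0. Proof. by rewrite pnatr_eq0 -lt0n. Qed.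

Lemma Bm_unit : Bm m \in unitmx.
Proof. by rewrite unitmxE Bm_mat2 det_mat2 mulr1 mulr0 subr0 unitfE. Qed.

Lemma invmx_Bm : invmx (Bm m) = mat2 m%:R^-1 0 0 1.
Proof.
have inv : mat2 m%:R^-1 0 0 1 *m Bm m = 1%:M.
  by rewrite Bm_mat2 mul_mat2 mat2z1; congr mat2; field.
by rewrite -[RHS](mulmxK Bm_unit) inv mul1mx.
Qed.

Lemma conj_Bm A : Bm m *m A *m invmx (Bm m) =
  mat2 (A 0 0) (m%:R * A 0 1) (A 1 0 / m%:R) (A 1 1).
Proof.
by rewrite {1}[A]mat2_entries invmx_Bm Bm_mat2 !mul_mat2; congr mat2; field.
Qed.

Lemma conj_Bm_mat2z a b c d :
  Bm m *m mat2z a b (m%:Z * c) d *m invmx (Bm m) = mat2z a (m%:Z * b) c d.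
Proof. by rewrite conj_Bm !mxE /=; congr mat2; rewrite !intrM; field. Qed.

Lemma Gamma0_conj {N x} :
  Gamma0 (m * N) x -> Gamma0 N (Bm m *m x *m invmx (Bm m)).
Proof.
move=> /Gamma0P[a [b [c [d [-> det1]]]]]; rewrite PoszM -mulrA conj_Bm_mat2z.
apply/Gamma0P; exists a, (m%:Z * b), c, d; split=> //.
by rewrite -det1 PoszM; ring.
Qed.

Lemma Gamma0_conj_image {N y} : Gamma0 N y -> (exists b, y 0 1 = (m%:Z * b)%:~R) ->
  exists2 x, Gamma0 (m * N) x & y = Bm m *m x *m invmx (Bm m).
Proof.
move=> /Gamma0P[a [mb [c [d [-> det1]]]]] [b]; rewrite mat2_01 => /intr_inj Emb.
exists (mat2z a b ((m * N)%N%:Z * c) d).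
  by apply/Gamma0P; exists a, b, c, d; rewrite -det1 Emb PoszM; split=> //; ring.
by rewrite PoszM -mulrA conj_Bm_mat2z Emb.
Qed.

Lemma Gamma0_conj_reflect {N z} :
  SL2Z z -> Gamma0 N (Bm m *m z *m invmx (Bm m)) -> Gamma0 (m * N) z.
Proof.
rewrite conj_Bm => SLz [_ [c]]; rewrite mat2_10 => Ec; split=> //; exists c.
have -> : (ord_max : 'I_2) = 1 by apply: val_inj.
by rewrite -(divfK m_neq0 (z 1 0)) Ec PoszM -mulrA [RHS]intrM mulrC.
Qed.

End ConjugationByBm.

Section ConjugateCosetReps.
Context {B : mx2} {H G H' G' : mx2 -> Prop}.
Hypotheses (B_unit : B \in unitmx) (groupH : mx2_group H) (groupG : mx2_group G).
Hypotheses (groupH' : mx2_group H') (groupG' : mx2_group G').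
Local Notation conj x := (B *m x *m invmx B).
Hypothesis conj_H : forall x, H x -> H' (conj x).
Hypothesis conj_G : forall x, G x -> G' (conj x).
Hypothesis conj_reflect : forall x, G x -> H' (conj x) -> H x.
Hypothesis sub_H'G' : forall x, H' x -> G' x.
Hypothesis G'_factor : forall g, G' g -> exists h x, [/\ H' h, G x & g = h *m conj x].

Lemma conjM x y : conj (x *m y) = conj x *m conj y.
Proof. by rewrite !mulmxA mulmxKV. Qed.

Lemma right_coset_reps_conj J (R : J -> mx2) :
  right_coset_reps H G R -> right_coset_reps H' G' (fun j => conj (R j)).
Proof.
case: groupH => H_1 _ _; case: groupG => _ G_mul G_inv.
case: groupH' => _ H'_mul H'_inv; case: groupG' => _ G'_mul _.
move=> [cover disj]; have G_R j : G (R j).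
  by apply/cover; exists j, 1%:M; rewrite mul1mx.
split=> [g | j k neq_jk g [h1 [H'h1 ->]] [h2 [H'h2 E]]].
  split=> [/G'_factor[h [x [H'h Gx ->]]] | [j [h [H'h ->]]]]; last first.
    apply: G'_mul; [exact: sub_H'G' | exact: conj_G].
  have [j [h0 [Hh0 ->]]] := (cover x).1 Gx.
  exists j, (h *m conj h0); split; first by apply: H'_mul; last exact: conj_H.
  by rewrite conjM !mulmxA.
pose z := R k *m invmx (R j).
have [unit_Rj G_Rj'] := G_inv _ (G_R j).
have [unit_h2 H'_h2'] := H'_inv _ H'h2.
have conj_z : conj z = invmx h2 *m h1.
  apply: (canRL (mulKmx unit_h2)).
  by rewrite conjM (mulmxA h2) -E -mulmxA -conjM mulmxV // mulmx1 mulmxV // mulmx1.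
have Hz : H z.
  apply: conj_reflect; first exact: G_mul _ _ (G_R k) G_Rj'.
  by rewrite conj_z; exact: H'_mul _ _ H'_h2' H'h1.
apply: (disj j k neq_jk (R k)); first by exists z; rewrite mulmxKV.
by exists 1%:M; rewrite mul1mx.
Qed.

End ConjugateCosetReps.

Lemma Gamma0_shift_upper_right {n m m' g} : (0 < m)%N -> coprime m m' -> Gamma0 n g ->
  exists2 h, Gamma0 (m' * n) h & exists b, (h *m g) 0 1 = (m%:Z * b)%:~R.
Proof.
move=> m_gt0 cop /Gamma0P[a [b [c [d [-> det1]]]]].
have cop_gcd : coprimez (gcdz d ((m' * n)%N%:Z * b)) m.
  have cop_d : coprimez d (n%:Z * b).
    by apply/coprimezP; exists (a, - c); rewrite -det1 /=; ring.
  rewrite PoszM -mulrA Gauss_gcdzl //; apply: coprimez_dvdl (dvdz_gcdr d m') _.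
  by rewrite coprimezE !absz_nat coprime_sym.
have [k cop_k] := coprimez_shift m_gt0 cop_gcd.
have [[u v] /= bezout] := coprimezP _ _ cop_k.
pose K := (m' * n)%N%:Z * k; pose s := - (b * u).
(* The upper right entry of h g is b + s (d + K b) = b (1 - u (d + K b)) = b v m. *)
exists (mat2z (1 + s * K) s K 1).
  by apply/Gamma0P; exists (1 + s * K), s, k, 1; split=> //; rewrite /K; ring.
exists (b * v); rewrite mul_mat2z mat2_01; congr intmul.
have -> : (1 + s * K) * b + s * d = b * (1 - u * (d + (m' * n)%N%:Z * b * k)).
  by rewrite /s /K; ring.
by rewrite -bezout; ring.
Qed.

Lemma Gamma0_factor n m m' g : (0 < m)%N -> coprime m m' -> Gamma0 n g ->
  exists h x, [/\ Gamma0 (m' * n) h, Gamma0 (m * n) x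
                & g = h *m (Bm m *m x *m invmx (Bm m))].
Proof.
move=> m_gt0 cop Gg; have [h Hh [b Eb]] := Gamma0_shift_upper_right m_gt0 cop Gg.
have [unit_h Hh'] := Gamma0_inv Hh.
have Ghg : Gamma0 n (h *m g) by apply: Gamma0_mul (Gamma0_dvd (dvdn_mull _ _) Hh) Gg.
have [x Gx Ex] := Gamma0_conj_image m_gt0 Ghg (ex_intro _ b Eb).
by exists (invmx h), x; rewrite -Ex mulKmx.
Qed.

Theorem mainTheorem11 (n m m' : nat) (J : Type) (R : J -> mx2) :
  (0 < n)%N -> (0 < m)%N -> (0 < m')%N -> coprime m m' ->
  right_coset_reps (Gamma0 (m * m' * n)) (Gamma0 (m * n)) R ->
  right_coset_reps (Gamma0 (m' * n)) (Gamma0 n)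
    (fun j => Bm m *m R j *m invmx (Bm m)).
Proof.
move=> _ m_gt0 _ cop; apply: (right_coset_reps_conj (Bm_unit m_gt0));
  try exact: Gamma0_group.
- by move=> x; rewrite -mulnA; apply: Gamma0_conj.
- exact: Gamma0_conj.
- by move=> x [SLx _]; rewrite -mulnA; apply: Gamma0_conj_reflect.
- by move=> x; apply: Gamma0_dvd (dvdn_mull _ (dvdnn n)).
- by move=> g; apply: Gamma0_factor.
Qed.
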